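(* Let $D:\mathbf{Sets}\to\mathbf{cMet}_1$ send a set $X$ to $X$ with the discrete metric ($d(x,y)=1$ for $x\ne y$, $d(x,x)=0$) and a function to itself. Then $\mathbf{CMT}(D X)=\mathbf{U}(X)$ as preorders for every set $X$, and $(D,\mathrm{id})$ is an embedding of universally coherent hyperdoctrines $\mathbf{U}\to\mathbf{CMT}$ which is bijective on predicates. Consequently, for every infinite set $X$ the preorder $\mathbf{CMT}(DX)$ has neither a Heyting negation nor a Heyting implication.
   Context: $\mathbf{cMet}_1$ is the category of complete metric spaces of diameter at most 1 with uniformly continuous maps. For functions $\alpha,\beta:X\to[0,1]$ write $\alpha\sqsubseteq\beta$ if for every $\varepsilon>0$ there exists $\delta>0$ such that for all $x$, $\alpha(x)\le\delta$ implies $\beta(x)\le\varepsilon$. $\mathbf{U}$ is the indexed preorder on $\mathbf{Sets}$ with $\mathbf{U}(X)$ all functions $X\to[0,1]$ under $\sqsubseteq$ and reindexing by precomposition; $\mathbf{CMT}$ is the indexed preorder on $\mathbf{cMet}_1$ with $\mathbf{CMT}(X,d)$ the uniformly continuous functions $(X,d)\to[0,1]$ under $\sqsubseteq$ and reindexing by precomposition. Both are universally coherent hyperdoctrines (meet $=\max$, join $=\min$, $\exists=\inf$ and $\forall=\sup$ over fibres of projections). A morphism of universally coherent hyperdoctrines $(F,\eta):\mathbf P\to\mathbf P'$ (bases $\mathcal C,\mathcal D$) consists of a finite-product-preserving functor $F:\mathcal C\to\mathcal D$ and a pseudonatural transformation $\eta:\mathbf P\to\mathbf P'\circ F^{op}$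 whose components preserve finite meets and joins up to isomorphism, commuting up to isomorphism with $\exists_\pi$ and $\forall_\pi$ along projections and preserving equality predicates. It is an embedding if $F$ is full and faithful and each $\eta_X$ reflects the order. A Heyting negation on a preorder with meets and bottom $\bot$ is an operation $\neg$ with $\gamma\wedge\beta\le\bot\iff\gamma\le\neg\beta$ for all $\gamma$. *)

From Stdlib Require Import Reals Lra Classical ClassicalEpsilon List.
From Coquelicot Require Import Coquelicot.
Open Scope R_scope.

Definition in01 {X : Type} (a : X -> R) : Prop := forall x, 0 <= a x <= 1.

Definition sqle {X : Type} (a b : X -> R) : Prop :=
  forall eps, 0 < eps -> exists delta, 0 < delta /\
    forall x, a x <= delta -> b x <= eps.

Definition sqeq {X : Type} (a b : X -> R) : Prop := sqle a b /\ sqle b a.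

Record cMet1 := {
  cm_car :> Type;
  cm_d : cm_car -> cm_car -> R;
  cm_nonneg : forall x y, 0 <= cm_d x y;
  cm_refl : forall x, cm_d x x = 0;
  cm_sep : forall x y, cm_d x y = 0 -> x = y;
  cm_sym : forall x y, cm_d x y = cm_d y x;
  cm_tri : forall x y z, cm_d x z <= cm_d x y + cm_d y z;
  cm_diam : forall x y, cm_d x y <= 1;
  cm_complete : forall u : nat -> cm_car,
    (forall eps, 0 < eps -> exists N, forall m n, (N <= m)%nat -> (N <= n)%nat ->
        cm_d (u m) (u n) < eps) ->
    exists l, forall eps, 0 < eps -> exists N, forall n, (N <= n)%nat ->
        cm_d (u n) l < eps
}.

Definition unif_cont (Y Z : cMet1) (f : Y -> Z) : Prop :=
  forall eps, 0 < eps -> exists delta, 0 < delta /\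
    forall x y, cm_d Y x y < delta -> cm_d Z (f x) (f y) < eps.

Definition unif_cont_R (Y : cMet1) (a : Y -> R) : Prop :=
  forall eps, 0 < eps -> exists delta, 0 < delta /\
    forall x y, cm_d Y x y < delta -> Rabs (a x - a y) < eps.

Definition ddisc (X : Type) (x y : X) : R :=
  if excluded_middle_informative (x = y) then 0 else 1.

Lemma ddisc_nonneg X x y : 0 <= ddisc X x y.
Proof. unfold ddisc; destruct excluded_middle_informative; lra. Qed.
Lemma ddisc_refl X x : ddisc X x x = 0.
Proof. unfold ddisc; destruct excluded_middle_informative; congruence. Qed.
Lemma ddisc_sep X x y : ddisc X x y = 0 -> x = y.
Proof. unfold ddisc; destruct excluded_middle_informative; auto; lra. Qed.
Lemma ddisc_sym X x y : ddisc X x y = ddisc X y x.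
Proof.
  unfold ddisc; do 2 destruct excluded_middle_informative; subst; congruence.
Qed.
Lemma ddisc_tri X x y z : ddisc X x z <= ddisc X x y + ddisc X y z.
Proof.
  unfold ddisc; do 3 destruct excluded_middle_informative; subst; try lra;
  congruence.
Qed.
Lemma ddisc_diam X x y : ddisc X x y <= 1.
Proof. unfold ddisc; destruct excluded_middle_informative; lra. Qed.
Lemma ddisc_lt1 X x y : ddisc X x y < 1 -> x = y.
Proof. unfold ddisc; destruct excluded_middle_informative; auto; lra. Qed.

Lemma ddisc_complete (X : Type) : forall u : nat -> X,
    (forall eps, 0 < eps -> exists N, forall m n, (N <= m)%nat -> (N <= n)%nat ->
        ddisc X (u m) (u n) < eps) ->
    exists l, forall eps, 0 < eps -> exists N, forall n, (N <= n)%nat ->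
        ddisc X (u n) l < eps.
Proof.
  intros u Hu. destruct (Hu 1 Rlt_0_1) as [N HN].
  exists (u N). intros eps Heps. exists N. intros n Hn.
  rewrite (ddisc_lt1 X (u n) (u N) (HN n N Hn (le_n N))), ddisc_refl. exact Heps.
Qed.

Definition D (X : Type) : cMet1 :=
  {| cm_car := X; cm_d := ddisc X;
     cm_nonneg := ddisc_nonneg X; cm_refl := ddisc_refl X;
     cm_sep := ddisc_sep X; cm_sym := ddisc_sym X; cm_tri := ddisc_tri X;
     cm_diam := ddisc_diam X; cm_complete := ddisc_complete X |}.

Definition Upred (X : Type) (a : X -> R) : Prop := in01 a.

Definition CMTpred (Y : cMet1) (a : Y -> R) : Prop := in01 a /\ unif_cont_R Y a.

Definition top_p {X : Type} : X -> R := fun _ => 0.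
Definition bot_p {X : Type} : X -> R := fun _ => 1.
Definition meet_p {X : Type} (a b : X -> R) : X -> R := fun x => Rmax (a x) (b x).
Definition join_p {X : Type} (a b : X -> R) : X -> R := fun x => Rmin (a x) (b x).

(* infimum / supremum of a subset of [0,1], computed in the complete
   lattice [0,1] (inf of the empty set is 1, sup of the empty set is 0) *)
Definition inf01 (E : R -> Prop) : R := real (Glb_Rbar (fun r => E r \/ r = 1)).
Definition sup01 (E : R -> Prop) : R := real (Lub_Rbar (fun r => E r \/ r = 0)).

Definition exists_p {X Y : Type} (a : (X * Y)%type -> R) : X -> R :=
  fun x => inf01 (fun r => exists y, r = a (x, y)).
Definition forall_p {X Y : Type} (a : (X * Y)%type -> R) : X -> R :=
  fun x => sup01 (fun r => exists y, r = a (x, y)).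

(* equality predicates: in U, 0 on the diagonal and 1 elsewhere
   (= ∃_Δ ⊤); in CMT(Y,d), the metric d itself *)
Definition eqU (X : Type) : (X * X)%type -> R :=
  fun p => if excluded_middle_informative (fst p = snd p) then 0 else 1.
Definition eqCMT (Y : cMet1) : (Y * Y)%type -> R := fun p => cm_d Y (fst p) (snd p).

Definition D_functor_full_faithful_fp : Prop :=
  (forall (X Y : Type) (f : X -> Y), unif_cont (D X) (D Y) f) /\
  (forall (X Y : Type) (Z : cMet1) (f : Z -> X) (g : Z -> Y),
      unif_cont Z (D X) f -> unif_cont Z (D Y) g ->
      exists h : Z -> (X * Y)%type, unif_cont Z (D (X * Y)%type) h /\
        (forall z, fst (h z) = f z /\ snd (h z) = g z) /\
        (forall h' : Z -> (X * Y)%type, unif_cont Z (D (X * Y)%type) h' ->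
           (forall z, fst (h' z) = f z /\ snd (h' z) = g z) ->
           forall z, h' z = h z)) /\
  (forall Z : cMet1, exists h : Z -> unit, unif_cont Z (D unit) h /\
        forall h' : Z -> unit, unif_cont Z (D unit) h' -> forall z, h' z = h z) /\
  (forall (X Y : Type) (h : D X -> D Y), unif_cont (D X) (D Y) h ->
      exists f : X -> Y, forall x, h x = f x) /\
  (forall (X Y : Type) (f g : X -> Y), (forall x, f x = g x :> D Y) -> forall x, f x = g x).

Definition eta_embedding (eta : forall X : Type, (X -> R) -> (D X -> R)) : Prop :=
  (forall X a, Upred X a -> CMTpred (D X) (eta X a)) /\
  (forall X a b, Upred X a -> Upred X b -> (sqle a b <-> sqle (eta X a) (eta X b))) /\
  (forall (X Y : Type) (f : X -> Y) a, Upred Y a ->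
      sqeq (eta X (fun x => a (f x))) (fun x => eta Y a (f x))) /\
  (forall X, sqeq (eta X top_p) top_p) /\
  (forall X a b, Upred X a -> Upred X b ->
      sqeq (eta X (meet_p a b)) (meet_p (eta X a) (eta X b))) /\
  (forall X, sqeq (eta X bot_p) bot_p) /\
  (forall X a b, Upred X a -> Upred X b ->
      sqeq (eta X (join_p a b)) (join_p (eta X a) (eta X b))) /\
  (* ∃ and ∀ along projections X * Y -> X (D(X*Y) is the product of D X, D Y) *)
  (forall (X Y : Type) (a : (X * Y)%type -> R), Upred (X * Y)%type a ->
      sqeq (eta X (exists_p a)) (@exists_p X Y (eta (X * Y)%type a))) /\
  (forall (X Y : Type) (a : (X * Y)%type -> R), Upred (X * Y)%type a ->
      sqeq (eta X (forall_p a)) (@forall_p X Y (eta (X * Y)%type a))) /\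
  (forall X : Type, sqeq (eta (X * X)%type (eqU X)) (eqCMT (D X))).

Definition bijective_on_predicates (eta : forall X : Type, (X -> R) -> (D X -> R)) : Prop :=
  forall X : Type,
    (forall a a', Upred X a -> Upred X a' -> eta X a = eta X a' -> a = a') /\
    (forall b, CMTpred (D X) b -> exists a, Upred X a /\ eta X a = b).

Definition has_heyting_neg (Y : cMet1) : Prop :=
  exists neg : (Y -> R) -> (Y -> R),
    (forall b, CMTpred Y b -> CMTpred Y (neg b)) /\
    (forall g b, CMTpred Y g -> CMTpred Y b ->
       (sqle (meet_p g b) bot_p <-> sqle g (neg b))).

Definition has_heyting_imp (Y : cMet1) : Prop :=
  exists imp : (Y -> R) -> (Y -> R) -> (Y -> R),
    (forall a b, CMTpred Y a -> CMTpred Y b -> CMTpred Y (imp a b)) /\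
    (forall g a b, CMTpred Y g -> CMTpred Y a -> CMTpred Y b ->
       (sqle (meet_p g a) b <-> sqle g (imp a b))).

Definition infinite (X : Type) : Prop := ~ exists l : list X, forall x, In x l.

From Stdlib Require Import Reals Lra Lia Classical ClassicalEpsilon List.
Open Scope R_scope.

(* In the discrete space D X two points at distance < 1 coincide, so every map
   out of D X is uniformly continuous; conversely a uniformly continuous map into
   D X is "uniformly locally constant".  The first fact gives CMT(D X) = U(X)
   and that D is a full and faithful functor; the second shows that D preserves
   finite products.  Since CMT(D X) and U(X) then have the same predicates,
   lattice operations, quantifiers and order, the identity eta is an embedding,
   bijective on predicates, once the equality predicates (both the discrete
   metric) are matched.
   For the negative part, a Heyting implication yields a Heyting negation
   (b -> bottom), so it suffices to refute negation.  An infinite set carries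
   an injective sequence, hence a predicate b taking arbitrarily small positive
   values.  If c = neg b existed, c /\ b would be bounded away from 0 on a
   threshold d; the step predicate g (0 where b is large, 1 where b is small)
   satisfies g /\ b bounded away from 0, so g <= c, forcing c to be small at a
   point where b is also small -- contradicting the threshold d. *)

Lemma sqle_refl {X : Type} (a : X -> R) : sqle a a.
Proof. intros eps Heps; exists eps; split; auto. Qed.

Lemma sqeq_refl {X : Type} (a : X -> R) : sqeq a a.
Proof. split; apply sqle_refl. Qed.

Lemma sqle_bot_iff {X : Type} (f : X -> R) :
  sqle f bot_p <-> exists d, 0 < d /\ forall x, d < f x.
Proof.
  unfold bot_p; split.
  - intros Hf. destruct (Hf (1/2)) as [d [Hd Hx]]; [lra|].
    exists d; split; [exact Hd|]. intros x.
    destruct (Rle_lt_dec (f x) d) as [Hle|Hlt]; [specialize (Hx x Hle); lra|exact Hlt].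
  - intros [d [Hd Hx]] eps _. exists (d/2); split; [lra|].
    intros x Hfx. specialize (Hx x). lra.
Qed.

Lemma unif_cont_from_discrete (X : Type) (Z : cMet1) (f : X -> Z) :
  unif_cont (D X) Z f.
Proof.
  intros eps Heps; exists 1; split; [lra|]. intros x y Hxy; simpl in Hxy.
  rewrite (ddisc_lt1 X x y Hxy), cm_refl. exact Heps.
Qed.

Lemma unif_cont_R_from_discrete (X : Type) (a : X -> R) : unif_cont_R (D X) a.
Proof.
  intros eps Heps; exists 1; split; [lra|]. intros x y Hxy; simpl in Hxy.
  rewrite (ddisc_lt1 X x y Hxy), Rminus_diag_eq, Rabs_R0 by reflexivity. exact Heps.
Qed.

Lemma CMT_discrete_eq_U (X : Type) (a : X -> R) : CMTpred (D X) a <-> Upred X a.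
Proof.
  split.
  - intros [Ha _]; exact Ha.
  - intros Ha; split; [exact Ha|apply unif_cont_R_from_discrete].
Qed.

Lemma unif_cont_into_discrete (Z : cMet1) (X : Type) (f : Z -> X) :
  unif_cont Z (D X) f ->
  exists delta, 0 < delta /\ forall z z', cm_d Z z z' < delta -> f z = f z'.
Proof.
  intros Hf. destruct (Hf 1 Rlt_0_1) as [delta [Hdelta Hclose]].
  exists delta; split; [exact Hdelta|].
  intros z z' Hzz'. exact (ddisc_lt1 X _ _ (Hclose z z' Hzz')).
Qed.

Lemma unif_cont_pair (Z : cMet1) (X Y : Type) (f : Z -> X) (g : Z -> Y) :
  unif_cont Z (D X) f -> unif_cont Z (D Y) g ->
  unif_cont Z (D (X * Y)%type) (fun z => (f z, g z)).
Proof.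
  intros Hf Hg eps Heps.
  destruct (unif_cont_into_discrete Z X f Hf) as [d1 [Hd1 Hf1]].
  destruct (unif_cont_into_discrete Z Y g Hg) as [d2 [Hd2 Hg2]].
  exists (Rmin d1 d2); split; [apply Rmin_pos; assumption|].
  intros z z' Hzz'.
  pose proof (Rmin_l d1 d2); pose proof (Rmin_r d1 d2).
  rewrite (Hf1 z z'), (Hg2 z z') by lra. simpl; rewrite ddisc_refl. exact Heps.
Qed.

Lemma D_is_full_faithful_fp : D_functor_full_faithful_fp.
Proof.
  split; [|split; [|split; [|split]]].
  - intros X Y f. apply unif_cont_from_discrete.
  - intros X Y Z f g Hf Hg. exists (fun z => (f z, g z)).
    split; [apply unif_cont_pair; assumption|split].
    + intros z; split; reflexivity.
    + intros h' _ Hh' z. destruct (Hh' z) as [E1 E2].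
      rewrite (surjective_pairing (h' z)), E1, E2; reflexivity.
  - intros Z. exists (fun _ => tt); split.
    + intros eps Heps; exists 1; split; [lra|].
      intros; simpl; rewrite ddisc_refl; exact Heps.
    + intros h' _ z. destruct (h' z); reflexivity.
  - intros X Y h _. exists h; reflexivity.
  - intros X Y f g Hfg; exact Hfg.
Qed.

(* The identity is an embedding of hyperdoctrines U -> CMT o D^op: all the
   structure is given by literally the same formulas on both sides, and the
   discrete metric is the equality predicate of U. *)
Lemma identity_eta_embedding : eta_embedding (fun X a => a).
Proof.
  split; [intros X a Ha; apply CMT_discrete_eq_U, Ha|].
  split; [intros; tauto|].
  repeat split; intros; apply sqle_refl.
Qed.

Lemma identity_bijective_on_predicates : bijective_on_predicates (fun X a => a).
Proof.
  intros X; split.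
  - intros a a' _ _ E; exact E.
  - intros b Hb; exists b; split; [apply CMT_discrete_eq_U, Hb|reflexivity].
Qed.

(* Enumerating an infinite set greedily: the n-th list holds the first n
   chosen points, and the next point is chosen outside of it. *)
Fixpoint greedy_prefix {X : Type} (next : list X -> X) (n : nat) : list X :=
  match n with
  | O => nil
  | S k => next (greedy_prefix next k) :: greedy_prefix next k
  end.

Lemma greedy_prefix_in {X : Type} (next : list X -> X) (m n : nat) :
  (m < n)%nat -> In (next (greedy_prefix next m)) (greedy_prefix next n).
Proof.
  induction n as [|n IH]; intros Hmn; [lia|]. simpl.
  destruct (Nat.eq_dec m n) as [->|Hne]; [left; reflexivity|right; apply IH; lia].
Qed.

Lemma infinite_injective_seq (X : Type) :
  infinite X -> exists u : nat -> X, forall m n, u m = u n -> m = n.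
Proof.
  intros Hinf.
  assert (Hfresh : forall l : list X, {x | ~ In x l}).
  { intros l. apply constructive_indefinite_description, not_all_ex_not.
    intros Hall; apply Hinf; exists l; exact Hall. }
  set (next := fun l => proj1_sig (Hfresh l)).
  exists (fun n => next (greedy_prefix next n)). intros m n E.
  destruct (Compare_dec.lt_eq_lt_dec m n) as [[Hlt|Heq]|Hgt]; [exfalso|exact Heq|exfalso].
  - apply (proj2_sig (Hfresh (greedy_prefix next n))).
    fold (next (greedy_prefix next n)); rewrite <- E. apply greedy_prefix_in, Hlt.
  - apply (proj2_sig (Hfresh (greedy_prefix next m))).
    fold (next (greedy_prefix next m)); rewrite E. apply greedy_prefix_in, Hgt.
Qed.

Lemma inv_succ_bounds (k : nat) : 0 < / INR (S k) <= 1.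
Proof.
  assert (1 <= INR (S k)) by (apply (le_INR 1); lia).
  split; [apply Rinv_0_lt_compat; lra|].
  rewrite <- Rinv_1. apply Rinv_le_contravar; lra.
Qed.

(* On an infinite set there is a predicate taking arbitrarily small positive
   values: 1/(n+1) at the n-th point of an injective sequence, 1 elsewhere. *)
Lemma infinite_small_values (X : Type) :
  infinite X -> exists b : X -> R, in01 b /\ forall d, 0 < d -> exists x, 0 < b x <= d.
Proof.
  intros Hinf. destruct (infinite_injective_seq X Hinf) as [u Hu].
  set (index_of := fun x (H : exists n, x = u n) =>
                     proj1_sig (constructive_indefinite_description _ H)).
  set (b := fun x => match excluded_middle_informative (exists n, x = u n) with
                     | left H => / INR (S (index_of x H))
                     | right _ => 1 end).
  assert (Hbu : forall k, b (u k) = / INR (S k)).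
  { intros k. unfold b. destruct excluded_middle_informative as [H|H].
    - unfold index_of; destruct constructive_indefinite_description as [m Hm].
      simpl. rewrite (Hu k m Hm); reflexivity.
    - exfalso; apply H; exists k; reflexivity. }
  exists b; split.
  - intros x. unfold b. destruct excluded_middle_informative as [H|_]; [|lra].
    pose proof (inv_succ_bounds (index_of x H)); lra.
  - intros d Hd. destruct (archimed_cor1 d Hd) as [N [HN HNpos]].
    exists (u (pred N)). rewrite Hbu. replace (S (pred N)) with N by lia.
    pose proof (inv_succ_bounds (pred N)) as Hb. replace (S (pred N)) with N in Hb by lia.
    lra.
Qed.

Lemma no_heyting_neg (X : Type) (b : X -> R) :
  in01 b -> (forall d, 0 < d -> exists x, 0 < b x <= d) -> ~ has_heyting_neg (D X).
Proof.
  intros Hb Hsmall [neg [Hneg_cl Hneg_adj]].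
  assert (HbC : CMTpred (D X) b) by (apply CMT_discrete_eq_U, Hb).
  set (c := neg b).
  assert (HcC : CMTpred (D X) c) by (apply Hneg_cl, HbC).
  assert (Hcb : exists d, 0 < d /\ forall x, d < Rmax (c x) (b x)).
  { apply sqle_bot_iff, (Hneg_adj c b HcC HbC), sqle_refl. }
  destruct Hcb as [d [Hd Hcb]].
  destruct (Hsmall d Hd) as [x0 [Hbx0 Hbx0d]].
  set (g := fun x : X => if Rle_dec (b x) (b x0 / 2) then 1 else 0).
  assert (HgC : CMTpred (D X) g).
  { apply CMT_discrete_eq_U; intros x; unfold g; destruct Rle_dec; lra. }
  assert (Hg_below_c : sqle g c).
  { apply (Hneg_adj g b HgC HbC), sqle_bot_iff. exists (b x0 / 4); split; [lra|].
    intros x. pose proof (Hb x0). unfold meet_p, g. destruct Rle_dec.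
    - pose proof (Rmax_l 1 (b x)); lra.
    - pose proof (Rmax_r 0 (b x)); lra. }
  destruct (Hg_below_c (d/2)) as [d' [Hd' Hgc]]; [lra|].
  assert (Hcx0 : c x0 <= d/2).
  { apply Hgc. unfold g. destruct Rle_dec; lra. }
  specialize (Hcb x0). unfold Rmax in Hcb; destruct Rle_dec in Hcb; lra.
Qed.

Lemma heyting_imp_gives_neg (Y : cMet1) : has_heyting_imp Y -> has_heyting_neg Y.
Proof.
  intros [imp [Himp_cl Himp_adj]]. exists (fun b => imp b bot_p).
  assert (HbotC : CMTpred Y bot_p).
  { split; [intros x; unfold bot_p; lra|].
    intros eps Heps; exists 1; split; [lra|]. intros; unfold bot_p.
    rewrite Rminus_diag_eq, Rabs_R0 by reflexivity; exact Heps. }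
  split.
  - intros b Hb; apply Himp_cl; assumption.
  - intros g b Hg Hb; apply Himp_adj; assumption.
Qed.

Theorem mainTheorem6 :
  (* CMT(D X) = U(X) as preorders (both ordered by ⊑) *)
  (forall (X : Type) (a : X -> R), CMTpred (D X) a <-> Upred X a) /\
  (* (D, id) is an embedding of universally coherent hyperdoctrines U -> CMT *)
  D_functor_full_faithful_fp /\
  eta_embedding (fun X a => a) /\
  (* ... which is bijective on predicates *)
  bijective_on_predicates (fun X a => a) /\
  (* for infinite X, CMT(D X) has neither a Heyting negation nor implication *)
  (forall X : Type, infinite X ->
     ~ has_heyting_neg (D X) /\ ~ has_heyting_imp (D X)).
Proof.
  split; [exact CMT_discrete_eq_U|].
  split; [exact D_is_full_faithful_fp|].
  split; [exact identity_eta_embedding|].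
  split; [exact identity_bijective_on_predicates|].
  intros X Hinf.
  destruct (infinite_small_values X Hinf) as [b [Hb Hsmall]].
  pose proof (no_heyting_neg X b Hb Hsmall) as Hno_neg.
  split; [exact Hno_neg|].
  intros Himp; exact (Hno_neg (heyting_imp_gives_neg (D X) Himp)).
Qed.
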